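(* Let $\mathbf T$ be a countable homogeneous tournament and $\mathbf T^*$ an expansion of $\mathbf T$ as in the context. If $\mathrm{Age}(\mathbf T^* )$ has the expansion property relative to $\mathrm{Age}(\mathbf T)$, then for every positive integer $n$, $\mathrm{Age}(I_n[\mathbf T]^* )$ has the expansion property relative to $\mathrm{Age}(I_n[\mathbf T])$, where $I_n[\mathbf T]$ is the reduct of $I_n[\mathbf T]^*$ to $\{E\}$.
   Context: The age $\mathrm{Age}(\mathbf F)$ of a structure $\mathbf F$ is the class of finite structures embeddable in $\mathbf F$. Expansion property: let $L\subseteq L^*$ be relational languages, $\mathcal K$ a class of finite $L$-structures and $\mathcal K^*$ a class of finite $L^*$-structures whose $L$-reducts lie in $\mathcal K$. $\mathcal K^*$ has the expansion property relative to $\mathcal K$ if for every $\mathbf A\in\mathcal K$ there is $\mathbf B\in\mathcal K$ such that for all $\mathbf A^*,\mathbf B^*\in\mathcal K^*$ whose $L$-reducts are $\mathbf A$ and $\mathbf B$ respectively, $\mathbf A^*$ embeds into $\mathbf B^*$. A tournament is a directed graph in which every pair of distinct vertices carries exactly one directed edge; it is homogeneous if every isomorphism between finite substructures extends to an automorphism. $\mathbf T=(T,E^{\mathbf T})$ is a countable homogeneous tournament, and $\mathbf T^*$ is an expansion of $\mathbf T$ to a countable relational language $L_{\mathbf T^*}\supseteq\{E,<\}$ in which $<$ is interpreted as a linear order $<^*$ on $T$. For a positive integer $n$, $[n]=\{0,\dots,n-1\}$. The structure $I_n[\mathbf T]^*$ has universe $[n]\times T$ and language $L_{\mathbf T^*}\cup\{P_0,\dots,P_{n-1}\}$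 ($P_i$ new unary symbols), interpreted as: for each $m$-ary $R\in L_{\mathbf T^*}\setminus\{<\}$ (including $E$), $R((k_1,x_1),\dots,(k_m,x_m))$ iff $k_1=\dots=k_m$ and $R^{\mathbf T^*}(x_1,\dots,x_m)$; $(i,x)<(j,y)$ iff $i<j$, or $i=j$ and $x<^*y$; and $P_i=\{i\}\times T$. *)

From Stdlib Require List.
From mathcomp Require Import all_boot.
Set Warnings "-notation-overridden".
Set Implicit Arguments. Unset Strict Implicit. Unset Printing Implicit Defensive.

Record lang := Lang { sym : Type; ar : sym -> nat }.

Record structure (L : lang) := Struct {
  car : Type;
  rel : forall s : sym L, ('I_(ar s) -> car) -> Prop }.
Arguments Struct {L} car rel.
Arguments car {L} _.
Arguments rel {L} _ _ _.

Record fstructure (L : lang) := FStruct {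
  fcar : finType;
  frel : forall s : sym L, ('I_(ar s) -> fcar) -> Prop }.
Arguments FStruct {L} fcar frel.
Arguments fcar {L} _.
Arguments frel {L} _ _ _.

Definition struct_of (L : lang) (A : fstructure L) : structure L :=
  @Struct L (fcar A) (frel A).
Coercion struct_of : fstructure >-> structure.

Definition is_embedding (L : lang) (A B : structure L) (f : car A -> car B) :=
  injective f /\
  forall (s : sym L) (x : 'I_(ar s) -> car A), rel A s x <-> rel B s (f \o x).

Definition embeds (L : lang) (A B : structure L) : Prop :=
  exists f : car A -> car B, is_embedding f.

Definition Age (L : lang) (F : structure L) : fstructure L -> Prop :=
  fun A => embeds A F.

Definition reduct (L L' : lang) (i : sym L -> sym L')
  (hi : forall s, ar (i s) = ar s) (A : structure L') : structure L :=
  @Struct L (car A) (fun s x => rel A (i s) (x \o cast_ord (hi s))).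

Definition freduct (L L' : lang) (i : sym L -> sym L')
  (hi : forall s, ar (i s) = ar s) (A : fstructure L') : fstructure L :=
  @FStruct L (fcar A) (fun s x => frel A (i s) (x \o cast_ord (hi s))).

Arguments reduct {L L'} i hi A.
Arguments freduct {L L'} i hi A.

Definition expansion_property (L L' : lang) (i : sym L -> sym L')
  (hi : forall s, ar (i s) = ar s)
  (K : fstructure L -> Prop) (Kstar : fstructure L' -> Prop) : Prop :=
  forall A, K A ->
  exists B, K B /\
    forall As Bs, Kstar As -> Kstar Bs ->
      freduct i hi As = A -> freduct i hi Bs = B -> embeds As Bs.

Arguments expansion_property {L L'} i hi K Kstar.

(* Homogeneity: every isomorphism between finite substructures (domain the
   finite set listed by D, map f restricted to D) extends to an automorphism. *)
Definition homogeneous (L : lang) (F : structure L) : Prop :=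
  forall (D : list (car F)) (f : car F -> car F),
    (forall x y, List.In x D -> List.In y D -> f x = f y -> x = y) ->
    (forall (s : sym L) (x : 'I_(ar s) -> car F), (forall k, List.In (x k) D) ->
       (rel F s x <-> rel F s (f \o x))) ->
    exists g : car F -> car F,
      bijective g /\
      (forall (s : sym L) (x : 'I_(ar s) -> car F), rel F s x <-> rel F s (g \o x)) /\
      (forall x, List.In x D -> g x = f x).

(* The pair (a,b) as a tuple indexed by 'I_m (meant for m = 2). *)
Definition pair2 (X : Type) (m : nat) (a b : X) : 'I_m -> X :=
  fun k => if nat_of_ord k == 0 then a else b.

Definition LE : lang := @Lang unit (fun _ => 2).

Definition is_tournament (T : Type) (E : T -> T -> Prop) : Prop :=
  (forall x, ~ E x x) /\
  (forall x y, x <> y -> (E x y \/ E y x) /\ ~ (E x y /\ E y x)).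

Definition strict_linear_order (T : Type) (lt : T -> T -> Prop) : Prop :=
  (forall x, ~ lt x x) /\
  (forall x y z, lt x y -> lt y z -> lt x z) /\
  (forall x y, x <> y -> lt x y \/ lt y x).

(* The language of I_n[T]^*: L_{T*} together with n new unary symbols P_i. *)
Definition LIn (Lsym : Type) (ar0 : Lsym -> nat) (n : nat) : lang :=
  @Lang (Lsym + 'I_n)%type
        (fun s => match s with inl s0 => ar0 s0 | inr _ => 1 end).

Definition In_star (Lsym : eqType) (ar0 : Lsym -> nat) (sLt : Lsym)
  (T : Type) (Rs : forall s : Lsym, ('I_(ar0 s) -> T) -> Prop) (n : nat)
  : structure (LIn ar0 n) :=
  let lexlt (p q : 'I_n * T) : Prop :=
      (p.1 < q.1)%N \/ (p.1 = q.1 /\ Rs sLt (pair2 p.2 q.2)) in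
  @Struct (LIn ar0 n) ('I_n * T)%type
    (fun s => match s as s' return ('I_(@ar (LIn ar0 n) s') -> 'I_n * T) -> Prop with
     | inl s0 => fun z =>
         if s0 == sLt then
           exists p q, (forall k, z k = pair2 p q k) /\ lexlt p q
         else
           (forall k k', (z k).1 = (z k').1) /\ Rs s0 (fun k => (z k).2)
     | inr i => fun z => forall k, (z k).1 = i
     end).

(* Let I := I_n[T]^* and I_E its reduct to {E}.  A structure in Age(I_E) is a disjoint union of
   at most n pieces, each in Age(T_E), with no edges between pieces.  Given A in Age(I_E):
   - for every subset C of A we take a witness B_C of the expansion property of T for A|C, and
     collect the images of all B_C in a single finite S of T (a "common witness", which by
     monotonicity of witnesses works for every C at once);
   - the witness for A is I_n[S], the substructure n x S of I_E.
   For expansions A^*, B^* of A and I_n[S] inside I, let a, b be their embeddings into I.  Since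
   S is a tournament, b maps each block j x S into a single block sigma(j) of I, and sigma is a
   permutation of the n blocks.  For each block i of I, the part of A sent by a into block i is
   some A|C, and the expansion property of T embeds it (with the structure induced by a) into
   sigma^-1(i) x S (with the structure induced by b).  Gluing these block maps gives a map that
   preserves blocks and, within a block, the T^*-relations; the relations of I_n[T]^* are
   determined by exactly these data, so the glued map is the required embedding. *)

From Stdlib Require Import ClassicalEpsilon FunctionalExtensionality PropExtensionality Classical.
Set Warnings "-notation-overridden".
From mathcomp Require Import all_boot.

Set Implicit Arguments.
Unset Strict Implicit.
Unset Printing Implicit Defensive.

(* The structure induced on a finite type X by a map e into F.  When e is injective this is
   the substructure of F on the image of e. *)
Definition pullback (L : lang) (F : structure L) (X : finType) (e : X -> car F)
  : fstructure L := @FStruct L X (fun s x => rel F s (e \o x)).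
Arguments pullback {L} F {X} e.

Lemma pullback_embedding (L : lang) (F : structure L) (X : finType) (e : X -> car F) :
  injective e -> is_embedding (A := pullback F e) (B := F) e.
Proof. by move=> e_inj; split=> // s x. Qed.

Lemma pullback_ext (L : lang) (F F' : structure L) (X : finType)
    (e : X -> car F) (e' : X -> car F') :
  (forall s x, rel F s (e \o x) <-> rel F' s (e' \o x)) -> pullback F e = pullback F' e'.
Proof.
move=> h; rewrite /pullback; congr FStruct.
apply: functional_extensionality_dep => s; apply: functional_extensionality => x.
exact: propositional_extensionality (h s x).
Qed.

Lemma embedding_pullback (L : lang) (A : fstructure L) (F : structure L)
    (f : fcar A -> car F) :
  is_embedding (A := A) (B := F) f -> A = pullback F f.
Proof.
case: A f => X R f [_ f_rel].
by apply: (@pullback_ext _ (Struct X R) F X id f) => s x; exact: f_rel.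
Qed.

Lemma embedding_comp (L : lang) (A B C : structure L) (f : car A -> car B) (g : car B -> car C) :
  is_embedding f -> is_embedding g -> is_embedding (g \o f).
Proof.
move=> [f_inj f_rel] [g_inj g_rel]; split; first exact: inj_comp.
by move=> s x; rewrite f_rel g_rel.
Qed.

Section Witnesses.
Variables (L L' : lang) (i : sym L -> sym L') (hi : forall s, ar (i s) = ar s).

Definition ep_witness (Kstar : fstructure L' -> Prop) (A B : fstructure L) : Prop :=
  forall As Bs, Kstar As -> Kstar Bs ->
    freduct i hi As = A -> freduct i hi Bs = B -> embeds As Bs.

(* A witness can be enlarged: if B embeds into B' then B' is again a witness, because an
   expansion of B' restricts along the embedding to an expansion of B. *)
Lemma ep_witness_mono (F : structure L') (A B B' : fstructure L) (e : fcar B -> fcar B') :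
  is_embedding (A := B) (B := B') e ->
  ep_witness (Age F) A B -> ep_witness (Age F) A B'.
Proof.
move=> e_emb wB As Bs' As_age [fB fB_emb] eA eB'; subst B'.
have [h [h_inj h_rel]] : embeds As (pullback Bs' e).
  apply: wB => //; last exact/esym/(@embedding_pullback _ _ (reduct i hi Bs')).
  exists (fB \o e); apply: embedding_comp fB_emb.
  by apply: pullback_embedding; case: e_emb.
exists (e \o h); split; first by apply: inj_comp h_inj; case: e_emb.
by move=> s x; rewrite h_rel.
Qed.

Lemma ep_of_maps (F : structure L') (A B : fstructure L) :
  (forall (a : fcar A -> car F) (b : fcar B -> car F),
     is_embedding (A := A) (B := reduct i hi F) a ->
     is_embedding (A := B) (B := reduct i hi F) b ->
     exists g : fcar A -> fcar B, injective g /\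
       forall s x, rel F s (a \o x) <-> rel F s (b \o (g \o x))) ->
  ep_witness (Age F) A B.
Proof.
move=> transfer As Bs [fA [fA_inj fA_rel]] [fB [fB_inj fB_rel]] eA eB; subst A B.
have [g [g_inj g_rel]] : exists g : fcar As -> fcar Bs, injective g /\
    forall s x, rel F s (fA \o x) <-> rel F s (fB \o (g \o x)).
  by apply: transfer; split=> // s x; [exact: fA_rel | exact: fB_rel].
by exists g; split=> // s x; rewrite fA_rel g_rel fB_rel.
Qed.

Lemma common_witness (T : choiceType) (R : forall s : sym L', ('I_(ar s) -> T) -> Prop)
    (J : finType) (A : J -> fstructure L) (t0 : T) :
  (forall X, Age (reduct i hi (Struct T R)) X ->
     exists B, Age (reduct i hi (Struct T R)) B /\ ep_witness (Age (Struct T R)) X B) ->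
  exists s : seq T, t0 \in s /\ forall j, Age (reduct i hi (Struct T R)) (A j) ->
    ep_witness (Age (Struct T R)) (A j) (pullback (reduct i hi (Struct T R)) (@ssval T s)).
Proof.
set F := Struct T R; set Fr := reduct i hi F => hEP.
have [W hW] : exists W : J -> {B : fstructure L & fcar B -> T}, forall j,
    Age Fr (A j) -> is_embedding (A := projT1 (W j)) (B := Fr) (projT2 (W j)) /\
                    ep_witness (Age F) (A j) (projT1 (W j)).
  apply: (choice (fun j (w : {B : fstructure L & fcar B -> T}) =>
    Age Fr (A j) -> is_embedding (A := projT1 w) (B := Fr) (projT2 w) /\
                    ep_witness (Age F) (A j) (projT1 w))) => j.
  case: (classic (Age Fr (A j))) => [/hEP [B [[e e_emb] wB]] | notA].
    by exists (existT _ B e).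
  by exists (existT _ (@FStruct L void (fun _ _ => False)) (of_void T)).
pose s := t0 :: flatten [seq [seq projT2 (W j) b | b <- enum (fcar (projT1 (W j)))]
                        | j <- enum J].
exists s; split=> [|j Aj]; first exact: mem_head.
have [[e_inj e_rel] wB] := hW j Aj.
have e_in b : projT2 (W j) b \in s.
  rewrite inE; apply/orP; right; apply/flattenP.
  exists [seq projT2 (W j) b0 | b0 <- enum (fcar (projT1 (W j)))].
    by apply/mapP; exists j; rewrite ?mem_enum.
  by apply: map_f; rewrite mem_enum.
apply: (@ep_witness_mono F _ _ (pullback Fr (@ssval T s)) (fun b => SeqSub (e_in b))) wB.
by split=> [b b' /(f_equal val) /e_inj|s0 x]; [|exact: e_rel].
Qed.

End Witnesses.

Definition restrict (L : lang) (A : fstructure L) (C : {set fcar A}) : fstructure L :=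
  pullback A (fun x : {x : fcar A | x \in C} => val x).
Arguments restrict {L} A C.
Arguments ep_witness {L L'} i hi Kstar A B.

Lemma pair2_comp (X Y : Type) (F : X -> Y) (m : nat) (a b : X) :
  F \o @pair2 X m a b = pair2 (F a) (F b).
Proof. by apply: functional_extensionality => k; rewrite /pair2 /=; case: ifP. Qed.

Lemma tuple2E (X : Type) (z : 'I_2 -> X) : z = pair2 (z ord0) (z ord_max).
Proof.
by apply: functional_extensionality => -[[|[|//]] k_lt]; congr z; apply: val_inj.
Qed.

Definition same_block (m : nat) (X : Type) (f : 'I_m -> X) : Prop :=
  forall k k', f k = f k'.

Definition block_ascent (m n : nat) (f : 'I_m -> 'I_n) : Prop :=
  exists k k' : 'I_m, (k < k')%N /\ (f k < f k')%N.

Lemma same_block_pair2 (X : Type) (m : nat) (hm : m = 2) (a b : X) :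
  same_block (@pair2 X m a b) <-> a = b.
Proof.
subst m; split=> [/(_ ord0 ord_max) //|e k k'].
by rewrite /pair2; do 2 case: ifP.
Qed.

(* The lexicographic clause defining < in I_n[T]^*, restated in terms of block indices. *)
Lemma lex_pair_char (n : nat) (T : Type) (m : nat) (hm : m = 2)
    (P : ('I_m -> T) -> Prop) (z : 'I_m -> 'I_n * T) :
  (exists p q, (forall k, z k = pair2 p q k) /\
     ((p.1 < q.1)%N \/ (p.1 = q.1 /\ P (pair2 p.2 q.2)))) <->
  block_ascent (fst \o z) \/ (same_block (fst \o z) /\ P (snd \o z)).
Proof.
subst m; rewrite [z]tuple2E !pair2_comp; set p := z ord0; set q := z ord_max.
split=> [[p' [q' [ez lex]]]|].
  have [-> ->] : p = p' /\ q = q' by split; [exact: (ez ord0) | exact: (ez ord_max)].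
  case: lex => [lt | [eq Ppq]]; [left | right; split=> //].
    by exists ord0, ord_max.
  exact/(same_block_pair2 erefl).
case=> [[k [k' [kk' lt]]] | [/(same_block_pair2 erefl) eq Ppq]];
  exists p, q; split=> //; [left | by right].
by move: k k' kk' lt => [[|[|//]] ?] [[|[|//]] ?].
Qed.

Lemma pair_eq_components (X Y : Type) (p q : X * Y) : p.1 = q.1 -> p.2 = q.2 -> p = q.
Proof. by case: p q => [? ?] [? ?] /= -> ->. Qed.

(* An embedding of n copies of a tournament into n copies of a tournament (with no edges
   between copies) maps each copy into a single copy, and permutes the copies. *)
Lemma block_permutation (T : Type) (E : T -> T -> Prop) (n : nat) (X : Type)
    (u : X -> T) (x0 : X) (b : 'I_n * X -> 'I_n * T) :
  is_tournament E -> injective u -> injective b ->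
  (forall p q, p.1 = q.1 /\ E (u p.2) (u q.2) <-> (b p).1 = (b q).1 /\ E (b p).2 (b q).2) ->
  exists sigma : 'I_n -> 'I_n, bijective sigma /\ forall j x, (b (j, x)).1 = sigma j.
Proof.
move=> [_ tour] u_inj b_inj b_edge.
have edge_either (p q : 'I_n * T) : p.1 = q.1 -> p <> q ->
    (p.1 = q.1 /\ E p.2 q.2) \/ (q.1 = p.1 /\ E q.2 p.2).
  move=> eq_blk ne; have ne2 : p.2 <> q.2 by move=> e2; apply: ne; exact: pair_eq_components.
  by case: (tour _ _ ne2) => -[e | e] _; [left | right].
have same_blk j x x' : (b (j, x)).1 = (b (j, x')).1.
  case: (classic (x = x')) => [-> // | ne].
  case: (tour _ _ (fun e => ne (u_inj _ _ e))) => -[e | e] _.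
    by case: (b_edge (j, x) (j, x')) => [/(_ (conj erefl e)) []].
  by case: (b_edge (j, x') (j, x)) => [/(_ (conj erefl e)) [] ->].
exists (fun j => (b (j, x0)).1); split=> [|j x]; last exact: same_blk.
apply: injF_bij => j j' eq_blk; apply: NNPP => ne.
have ne_img : b (j, x0) <> b (j', x0) by move=> /b_inj [].
by case: (edge_either _ _ eq_blk ne_img) => /b_edge [] //= /esym.
Qed.

Section InStar.
Variables (Lsym : eqType) (ar0 : Lsym -> nat) (sE sLt : Lsym).
Hypotheses (hE : ar0 sE = 2) (hLt : ar0 sLt = 2) (hEL : sE <> sLt).
Variables (T : choiceType) (Rs : forall s : Lsym, ('I_(ar0 s) -> T) -> Prop) (n : nat).
Arguments Rs : clear implicits.

Local Notation Tstar := (@Struct (Lang ar0) T Rs).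
Local Notation Tred := (reduct (L := LE) (L' := Lang ar0) (fun _ => sE) (fun _ => hE) Tstar).
Local Notation I := (In_star sLt Rs n).
Local Notation Ired := (reduct (L := LE) (L' := LIn ar0 n) (fun _ => inl sE) (fun _ => hE) I).
Local Notation reduct_to_T := (freduct (L := LE) (L' := Lang ar0) (fun _ => sE) (fun _ => hE)).
Local Notation T_witness :=
  (ep_witness (L := LE) (L' := Lang ar0) (fun _ => sE) (fun _ => hE) (Age Tstar)).

Lemma In_star_inl (s0 : Lsym) (z : 'I_(ar0 s0) -> 'I_n * T) :
  rel I (inl s0) z <->
  (s0 = sLt /\ block_ascent (fst \o z)) \/ (same_block (fst \o z) /\ Rs s0 (snd \o z)).
Proof.
move: z; case: (eqVneq s0 sLt) => [-> | ne] z /=; last first.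
  by rewrite (negbTE ne); split=> [|[[/eqP] | //]]; [right | rewrite (negbTE ne)].
rewrite eqxx (lex_pair_char hLt).
by split=> [[asc | blk] | [[_ asc] | blk]]; [left | right | left | right].
Qed.

Lemma In_star_in_block (s0 : Lsym) (z : 'I_(ar0 s0) -> 'I_n * T) :
  same_block (fst \o z) -> rel I (inl s0) z <-> Rs s0 (snd \o z).
Proof.
move=> blk; rewrite In_star_inl; split=> [[[_ [k [k' [_ lt]]]] | [_ //]] | ?]; last by right.
by move: lt; rewrite (blk k k') ltnn.
Qed.

Lemma Ired_in_block (z : 'I_2 -> 'I_n * T) :
  same_block (fst \o z) -> rel Ired tt z <-> rel Tred tt (snd \o z).
Proof. by move=> blk; apply: (In_star_in_block (z := z \o cast_ord hE)) => k k'; exact: blk. Qed.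

Lemma Ired_edge (p q : 'I_n * T) :
  rel Ired tt (pair2 p q) <-> p.1 = q.1 /\ Rs sE (pair2 p.2 q.2).
Proof.
have -> : rel Ired tt (pair2 p q) = rel I (inl sE) (pair2 p q) by [].
rewrite In_star_inl !pair2_comp (same_block_pair2 hE).
by split=> [[[/hEL] | //] | ?]; last by right.
Qed.

Lemma In_star_transfer (X Y : Type) (a : X -> 'I_n * T) (b : Y -> 'I_n * T) (g : X -> Y) :
  (forall x, (b (g x)).1 = (a x).1) ->
  (forall s0 (x : 'I_(ar0 s0) -> X), same_block (fst \o (a \o x)) ->
     Rs s0 (snd \o (a \o x)) <-> Rs s0 (snd \o (b \o (g \o x)))) ->
  forall st x, rel I st (a \o x) <-> rel I st (b \o (g \o x)).
Proof.
move=> blk_g rel_g [s0 | i] x; last first.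
  by rewrite /=; split=> h k; [rewrite blk_g | rewrite -blk_g]; exact: h.
have blk_eq : fst \o (b \o (g \o x)) = fst \o (a \o x).
  by apply: functional_extensionality => k; exact: blk_g.
rewrite !In_star_inl blk_eq.
split=> [[? | [blk r]] | [? | [blk r]]]; [left | right | left | right] => //.
  by split=> //; apply/rel_g.
by split=> //; apply/rel_g.
Qed.

Definition T_sub (s : seq T) : fstructure LE := pullback Tred (@ssval T s).

Definition In_sub (s : seq T) : fstructure LE :=
  pullback Ired (fun p : 'I_n * seq_sub s => (p.1, ssval p.2)).

Lemma block_piece (A : fstructure LE) (a : fcar A -> 'I_n * T) (s : seq T) (t0 : seq_sub s)
    (b : 'I_n * seq_sub s -> 'I_n * T) (i j : 'I_n) :
  (forall C, Age Tred (restrict A C) -> T_witness (restrict A C) (T_sub s)) ->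
  is_embedding (A := A) (B := Ired) a -> is_embedding (A := In_sub s) (B := Ired) b ->
  (forall t, (b (j, t)).1 = i) ->
  exists G : fcar A -> seq_sub s,
    (forall c c', (a c).1 = i -> (a c').1 = i -> G c = G c' -> c = c') /\
    (forall s0 (x : 'I_(ar0 s0) -> fcar A), (forall k, (a (x k)).1 = i) ->
       Rs s0 (snd \o (a \o x)) <-> Rs s0 (snd \o (b \o ((fun t => (j, t)) \o (G \o x))))).
Proof.
move=> W [a_inj a_rel] [b_inj b_rel] b_blk.
set C := [set c | (a c).1 == i].
have C_blk (c : {x | x \in C}) : (a (val c)).1 = i by have := valP c; rewrite inE => /eqP.
pose eA (c : {x | x \in C}) := (a (val c)).2.
pose eB (t : seq_sub s) := (b (j, t)).2.
have eA_inj : injective eA.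
  move=> c c' e; apply: val_inj; apply: a_inj.
  by apply: pair_eq_components; rewrite ?C_blk.
have eB_inj : injective eB.
  move=> t t' e; have [] // : (j, t) = (j, t').
  by apply: b_inj; apply: pair_eq_components; rewrite ?b_blk.
have A_red : reduct_to_T (pullback Tstar eA) = restrict A C.
  apply: (@pullback_ext _ Tred A _ eA val) => -[] y; rewrite (a_rel tt) Ired_in_block //.
  by move=> k k' /=; rewrite !C_blk.
have B_red : reduct_to_T (pullback Tstar eB) = T_sub s.
  apply: (@pullback_ext _ Tred Tred _ eB (@ssval T s)) => -[] y.
  rewrite -[rel Tred _ _]Ired_in_block; last by move=> k k' /=; rewrite !b_blk.
  have -> : rel Ired tt (b \o ((fun t => (j, t)) \o y)) <->
            rel (In_sub s) tt ((fun t => (j, t)) \o y) by rewrite (b_rel tt).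
  by apply: Ired_in_block.
have [g [g_inj g_rel]] : embeds (pullback Tstar eA) (pullback Tstar eB).
  by apply: (W C _ _ _ _ _ A_red B_red); [rewrite -A_red; exists eA | exists eA | exists eB];
    exact: pullback_embedding.
pose G c := if insub c is Some c' then g c' else t0.
have GE c (hc : c \in C) : G c = g (Sub c hc).
  rewrite /G; case: insubP => [u hu eu|]; last by rewrite hc.
  by congr g; apply: val_inj; rewrite SubK.
have inC c : (a c).1 = i -> c \in C by rewrite inE => ->.
exists G; split=> [c c' hc hc' | s0 x hx].
  by rewrite (GE c (inC c hc)) (GE c' (inC c' hc')) => /g_inj /(f_equal val).
pose y k : {x | x \in C} := Sub (x k) (inC _ (hx k)).
have -> : G \o x = g \o y.
  by apply: functional_extensionality => k; rewrite /= (GE _ (inC _ (hx k))).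
exact: (g_rel s0 y).
Qed.

Lemma In_star_lift (Ttour : is_tournament (fun x y : T => Rs sE (pair2 x y))) (n_gt0 : 0 < n)
    (A : fstructure LE) (s : seq T) (t0 : seq_sub s)
    (a : fcar A -> 'I_n * T) (b : 'I_n * seq_sub s -> 'I_n * T) :
  (forall C, Age Tred (restrict A C) -> T_witness (restrict A C) (T_sub s)) ->
  is_embedding (A := A) (B := Ired) a -> is_embedding (A := In_sub s) (B := Ired) b ->
  exists g : fcar A -> fcar (In_sub s), injective g /\
    forall st x, rel I st (a \o x) <-> rel I st (b \o (g \o x)).
Proof.
move=> W a_emb b_emb.
have [sigma [[sigma_inv _ sigma_invK] b_blk]] :
    exists sigma, bijective sigma /\ forall j t, (b (j, t)).1 = sigma j.
  case: b_emb => b_inj b_rel.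
  apply: (block_permutation (u := @ssval T s) t0 Ttour val_inj b_inj) => p q.
  pose iota (p : 'I_n * seq_sub s) := (p.1, ssval p.2).
  have src_edge : rel (In_sub s) tt (pair2 p q) <->
                  p.1 = q.1 /\ Rs sE (pair2 (ssval p.2) (ssval q.2)).
    apply: (iff_trans _ (Ired_edge (iota p) (iota q))).
    by rewrite -pair2_comp; exact: iff_refl.
  by rewrite -src_edge (b_rel tt) pair2_comp Ired_edge.
have piece i : exists G : fcar A -> seq_sub s,
    (forall c c', (a c).1 = i -> (a c').1 = i -> G c = G c' -> c = c') /\
    (forall s0 (x : 'I_(ar0 s0) -> fcar A), (forall k, (a (x k)).1 = i) ->
       Rs s0 (snd \o (a \o x)) <->
       Rs s0 (snd \o (b \o ((fun t => (sigma_inv i, t)) \o (G \o x))))).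
  by apply: (block_piece (j := sigma_inv i) t0 W a_emb b_emb) => t; rewrite b_blk sigma_invK.
have [G G_spec] := choice _ piece.
pose g c := (sigma_inv (a c).1, G (a c).1 c).
have g_blk c : (b (g c)).1 = (a c).1 by rewrite b_blk sigma_invK.
exists g; split=> [c c' e | ].
  have blk : (a c).1 = (a c').1 by rewrite -!g_blk e.
  apply: (G_spec (a c).1).1 => //.
  by move: e; rewrite /g -blk => -[].
apply: In_star_transfer => // s0 x blk.
have [i x_blk] : exists i, forall k, (a (x k)).1 = i.
  case: (pickP (fun _ : 'I_(ar0 s0) => true)) => [k0 _ | no_k].
    by exists (a (x k0)).1 => k; exact: blk.
  by exists (Ordinal n_gt0) => k; have := no_k k.
have -> : g \o x = (fun t => (sigma_inv i, t)) \o (G i \o x).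
  by apply: functional_extensionality => k; rewrite /= /g x_blk.
exact: (G_spec i).2.
Qed.

End InStar.

(* Theorem: the witness for A is I_n[S], with S a common witness for all subsets of A; the
   empty structure witnesses itself. *)
Theorem mainTheorem8
  (Lsym : countType) (ar0 : Lsym -> nat) (sE sLt : Lsym)
  (hE : ar0 sE = 2) (hLt : ar0 sLt = 2) (hEL : sE <> sLt)
  (T : countType) (Rs : forall s : Lsym, ('I_(ar0 s) -> T) -> Prop)
  (Ttour : is_tournament (fun x y : T => Rs sE (pair2 x y)))
  (Thom : homogeneous
            (reduct (L := LE) (L' := Lang ar0) (fun _ => sE) (fun _ => hE)
                    (@Struct (Lang ar0) T Rs)))
  (Tlin : strict_linear_order (fun x y : T => Rs sLt (pair2 x y)))
  (hEP : expansion_property (L := LE) (L' := Lang ar0) (fun _ => sE) (fun _ => hE)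
           (Age (reduct (L := LE) (L' := Lang ar0) (fun _ => sE) (fun _ => hE)
                   (@Struct (Lang ar0) T Rs)))
           (Age (@Struct (Lang ar0) T Rs))) :
  forall n : nat, (0 < n)%N ->
    expansion_property (L := LE) (L' := LIn ar0 n) (fun _ => inl sE) (fun _ => hE)
      (Age (reduct (L := LE) (L' := LIn ar0 n) (fun _ => inl sE) (fun _ => hE)
              (In_star sLt Rs n)))
      (Age (In_star sLt Rs n)).
Proof.
move=> n n_gt0 A [fA fA_emb].
have [a0 _ | A_empty] := pickP (fun _ : fcar A => true); last first.
  exists A; split; first by exists fA.
  apply: ep_of_maps => a b _ _; exists id; split=> // st x.
  have -> : a \o x = b \o (id \o x).
    by apply: functional_extensionality => k; have := A_empty (x k).
  exact: iff_refl.
have [s [t0_in W]] := common_witness (fun C : {set fcar A} => restrict A C) (fA a0).2 hEP.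
exists (In_sub sLt hE Rs n s); split.
  exists (fun p => (p.1, ssval p.2)); apply: pullback_embedding.
  by move=> [j t] [j' t'] [/= -> /val_inj ->].
apply: ep_of_maps => a b a_emb b_emb.
exact: (In_star_lift hLt hEL Ttour n_gt0 (SeqSub t0_in) W a_emb b_emb).
Qed.
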